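(* Let $\mathbf{C}$ be a category of $\mathbf{FI}$ type and $M_\bullet$ a finitely generated $\mathbf{C}$-module over $\mathbb{C}$. Then there exists a set $X$ of objects which is upward closed (if $c\in X$ and $c\leq d$ then $d\in X$) and cofinal (every object is $\leq$ some element of $X$) such that for every $c\in X$ and $d\geq c$ the induced map of coinvariants $M_c/G_c\to M_d/G_d$ is an isomorphism. More generally, for every free $\mathbf{C}$-module $F_\bullet$ the coinvariants of $F\otimes M$ stabilize in the same sense; in particular the spaces $\mathrm{Hom}_{G_c}(F_c,M_c)$ stabilize in the same sense.
   Context: A category $\mathbf{C}$ is of $\mathbf{FI}$ type if: (1) all Hom-sets are finite; (2) every morphism is a monomorphism and every endomorphism is an isomorphism; (3) for all objects $c,d$ the group $G_d=\mathrm{Aut}_{\mathbf{C}}(d)$ acts transitively on $\mathrm{Hom}_{\mathbf{C}}(c,d)$; (4) for every $d$ only finitely many isomorphism classes of $c$ have $\mathrm{Hom}(c,d)\neq\emptyset$; (5) every pair $c_1\to d\leftarrow c_2$ has a pullback, and every pair $f_i:p\to c_i$ has a weak push-out, i.e. a commutative pullback square $g_i:c_i\to d$ such that for every other pullback square $h_i:c_i\to z$ with $h_1f_1=h_2f_2$ there is a unique $h:d\to z$ with $hg_i=h_i$. Write $c\leq d$ if $\mathrm{Hom}(c,d)\neq\emptyset$; $G_c=\mathrm{Aut}(c)$. A $\mathbf{C}$-module is a functor to complex vector spaces; finitely generated means some finite set of elements lies in no proper submodule. For any $\mathbf{C}$-module the coinvariants $M_c/G_c$ form a $\mathbf{C}$-module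 (the map $M_c/G_c\to M_d/G_d$ is independent of the chosen morphism $c\to d$). For a finite-dimensional $G_c$-representation $V$, $\mathrm{Ind}_c(V)$ is $d\mapsto\mathbb{C}[\mathrm{Hom}(c,d)]\otimes_{\mathbb{C}[G_c]}V$; a free module is a finite direct sum of these. Tensor products are pointwise. The spaces $\mathrm{Hom}_{G_c}(F_c,M_c)$ are identified with $(F^*_c\otimes M_c)/G_c$, where $F^*=\bigoplus\mathrm{Ind}_{c_i}(V_i^* )$ for $F=\bigoplus\mathrm{Ind}_{c_i}(V_i)$. *)

From HB Require Import structures.
From mathcomp Require Import all_boot all_algebra.
From mathcomp Require Import reals complex.
From Stdlib Require List.
Set Implicit Arguments. Unset Strict Implicit. Unset Printing Implicit Defensive.
Import GRing.Theory.
Local Open Scope ring_scope.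

Record category := Category {
  Obj :> Type;
  Hom : Obj -> Obj -> finType;
  idm : forall c, Hom c c;
  comp : forall a b c, Hom b c -> Hom a b -> Hom a c;
  comp1m : forall a b (f : Hom a b), comp (idm b) f = f;
  compm1 : forall a b (f : Hom a b), comp f (idm a) = f;
  compA : forall a b c d (f : Hom c d) (g : Hom b c) (h : Hom a b),
      comp f (comp g h) = comp (comp f g) h }.

Section Cat.
Variable C : category.

Definition is_iso (a b : C) (f : Hom a b) : Prop :=
  exists g : Hom b a, comp g f = idm a /\ comp f g = idm b.

Definition iso_obj (a b : C) : Prop := exists f : Hom a b, is_iso f.

Definition leC (c d : C) : Prop := inhabited (Hom c d).

Definition is_pullback (p c1 c2 d : C) (f1 : Hom p c1) (f2 : Hom p c2)
    (g1 : Hom c1 d) (g2 : Hom c2 d) : Prop :=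
  comp g1 f1 = comp g2 f2 /\
  forall (q : C) (u1 : Hom q c1) (u2 : Hom q c2), comp g1 u1 = comp g2 u2 ->
    exists! u : Hom q p, comp f1 u = u1 /\ comp f2 u = u2.

Definition FI_type : Prop :=
  (* (1) finiteness of Hom-sets: built into [Hom : _ -> _ -> finType] *)
  (forall (a b c : C) (f : Hom b c) (g h : Hom a b), comp f g = comp f h -> g = h) /\
  (forall (c : C) (f : Hom c c), is_iso f) /\
  (forall (c d : C) (f1 f2 : Hom c d), exists g : Hom d d, is_iso g /\ comp g f1 = f2) /\
  (forall d : C, exists s : seq C,
     forall c : C, leC c d -> exists c', List.In c' s /\ iso_obj c c') /\
  (forall (c1 c2 d : C) (g1 : Hom c1 d) (g2 : Hom c2 d),
     exists (p : C) (f1 : Hom p c1) (f2 : Hom p c2), is_pullback f1 f2 g1 g2) /\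
  (forall (p c1 c2 : C) (f1 : Hom p c1) (f2 : Hom p c2),
     exists (d : C) (g1 : Hom c1 d) (g2 : Hom c2 d),
       is_pullback f1 f2 g1 g2 /\
       forall (z : C) (h1 : Hom c1 z) (h2 : Hom c2 z), is_pullback f1 f2 h1 h2 ->
         exists! h : Hom d z, comp h g1 = h1 /\ comp h g2 = h2).

End Cat.

Record Cmodule (K : fieldType) (C : category) := Cmod {
  Mob : C -> lmodType K;
  act : forall (c d : C), Hom c d -> Mob c -> Mob d;
  act_linear : forall c d (f : Hom c d) (a : K) (x y : Mob c),
      act f (a *: x + y) = a *: act f x + act f y;
  act_id : forall c (x : Mob c), act (idm c) x = x;
  act_comp : forall a b c (f : Hom b c) (g : Hom a b) (x : Mob a),
      act (comp f g) x = act f (act g x) }.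
Arguments act {K C} _ {c d}.

Section Modules.
Variables (K : fieldType) (C : category).

Definition is_submodule (M : Cmodule K C) (S : forall c : C, Mob M c -> Prop) : Prop :=
  (forall c, S c 0) /\
  (forall c (a : K) (x y : Mob M c), S c x -> S c y -> S c (a *: x + y)) /\
  (forall c d (f : Hom c d) (x : Mob M c), S c x -> S d (act M f x)).

Definition fin_gen (M : Cmodule K C) : Prop :=
  exists gens : seq {c : C & Mob M c},
    forall S, is_submodule S ->
      (forall p, List.In p gens -> S (tag p) (tagged p)) ->
      forall c (x : Mob M c), S c x.

Definition inspan (V : lmodType K) (P : V -> Prop) (v : V) : Prop :=
  exists s : seq (K * V), (forall p, List.In p s -> P p.2) /\
    v = \sum_(p <- s) p.1 *: p.2.

(* phi : V -> W (linear, mapping span RV into span RW) induces a bijection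
   V / span RV -> W / span RW *)
Definition quot_bij (V W : lmodType K) (RV : V -> Prop) (RW : W -> Prop)
    (phi : V -> W) : Prop :=
  (forall v, inspan RW (phi v) -> inspan RV v) /\
  (forall w, exists v, inspan RW (w - phi v)).

Definition stabilizes (Q : C -> lmodType K) (Rel : forall c, Q c -> Prop)
    (push : forall c d : C, Hom c d -> Q c -> Q d) : Prop :=
  exists X : C -> Prop,
    (forall c d : C, X c -> leC c d -> X d) /\
    (forall c : C, exists d, X d /\ leC c d) /\
    (forall (c d : C) (f : Hom c d), X c ->
       quot_bij (Rel c) (Rel d) (push c d f)).

(* generators of the kernel of M_c -> M_c / G_c *)
Definition coinv_rel (M : Cmodule K C) (c : C) (v : Mob M c) : Prop :=
  exists g : Hom c c, is_iso g /\ exists m : Mob M c, v = act M g m - m.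

(* ---------- free modules F = (+)_i Ind_{c_i}(V_i), V_i = K^(n_i) ---------- *)
Record freeData := FreeData {
  nF : nat;
  cs : 'I_nF -> C;
  dims : 'I_nF -> nat;
  rho : forall i : 'I_nF, Hom (cs i) (cs i) -> 'M[K]_(dims i);
  rho_id : forall i, @rho i (idm (cs i)) = 1%:M;
  rho_comp : forall i (g h : Hom (cs i) (cs i)), @rho i (comp g h) = @rho i g *m @rho i h }.

Section Tensor.
Variables (F : freeData) (M : Cmodule K C).

Definition fam (d : C) (i : 'I_(nF F)) : finType :=
  (Hom (cs i) d * 'I_(dims i))%type.

Definition idx (d : C) : finType := {i : 'I_(nF F) & fam d i}.

(* C[Hom(c_i,d)] (x) K^(n_i) (x) M_d, summed over i, identified with
   M_d-valued functions on the finite set of triples (i, f, j):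
   x corresponds to  sum_{(i,f,j)} e_f (x) e_j (x) x(i,f,j). *)
Definition Tsp (d : C) : lmodType K := {ffun idx d -> Mob M d}.

Definition elem (d : C) (i : 'I_(nF F)) (f : Hom (cs i) d) (v : 'cV[K]_(dims i))
    (m : Mob M d) : Tsp d :=
  [ffun p : idx d => \sum_(j < dims i)
      v j 0 *: (if p == Tagged (fam d) (f, j) then m else 0)].

(* generators of the kernel of  C[Hom]⊗V⊗M_d ->> (Ind V ⊗ M)_d / G_d :
   balancing over C[G_{c_i}] in the tensor product C[Hom(c_i,d)] (x)_{C[G_{c_i}]} V_i,
   and the G_d-coinvariant relations for the diagonal action. *)
Definition tens_rel (d : C) (x : Tsp d) : Prop :=
  (exists (i : 'I_(nF F)) (f : Hom (cs i) d) (g : Hom (cs i) (cs i))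
          (v : 'cV[K]_(dims i)) (m : Mob M d),
     is_iso g /\ x = elem (comp f g) v m - elem f (rho g *m v) m) \/
  (exists (h : Hom d d) (i : 'I_(nF F)) (f : Hom (cs i) d)
          (v : 'cV[K]_(dims i)) (m : Mob M d),
     is_iso h /\ x = elem (comp h f) v (act M h m) - elem f v m).

Definition mapidx (c d : C) (phi : Hom c d) (q : idx c) : idx d :=
  Tagged (fam d) (comp phi (tagged q).1, (tagged q).2).

Definition push (c d : C) (phi : Hom c d) (x : Tsp c) : Tsp d :=
  [ffun p : idx d => \sum_(q : idx c | mapidx phi q == p) act M phi (x q)].

End Tensor.
End Modules.

From Pilot Require Import Defs.
From HB Require Import structures.
From mathcomp Require Import all_boot all_algebra.
From mathcomp Require Import reals complex.
From mathcomp Require Import boolp zify.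
(* [Hom], [comp] and [compA] must denote the category operations, not MathComp's. *)
Import Defs.
Set Implicit Arguments. Unset Strict Implicit. Unset Printing Implicit Defensive.
Import GRing.Theory.
Local Open Scope ring_scope.

(* Both quotients are spanned, at every object d, by finitely many kinds of
   generators, each living on the objects above a fixed object: the images
   g x_k of the generators x_k of M, and for F (x) M the elementary tensors
   f (x) e_j (x) g x_k.  Such a tensor is determined by the pullback of f and g,
   which is isomorphic to one of finitely many representatives below c_i, and
   the weak push-out of that span is the object above which it lives.
   Transitivity of G_d on Hom(c, d) makes each generator well defined modulo the
   relations.  Along c <= d, the number of available generators and the
   dimension of the space of linear relations among them (modulo the
   relations) can only grow, and both are bounded by the number of kinds of
   generators; where their sum has stopped growing, the transition maps of the
   quotients are isomorphisms. *)

Section Span.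
Variables (K : fieldType) (V : lmodType K).
Implicit Types (P : V -> Prop) (x y : V).

Lemma inspan0 P : inspan P 0.
Proof. by exists [::]; split=> //; rewrite big_nil. Qed.

Lemma inspan1 P x : P x -> inspan P x.
Proof.
move=> Px; exists [:: (1, x)]; split; first by move=> p [<-|].
by rewrite big_cons big_nil scale1r addr0.
Qed.

Lemma inspan_lin P a x y : inspan P x -> inspan P y -> inspan P (a *: x + y).
Proof.
move=> [s [Ps ->]] [t [Pt ->]].
exists ([seq (a * p.1, p.2) | p <- s] ++ t); split.
  move=> p /(List.in_app_or _ _ _) [/(List.in_map_iff _ _ _) [q [<- /Ps //]]|/Pt //].
rewrite big_cat big_map /= scaler_sumr; congr (_ + _).
by apply: eq_bigr => p _; rewrite scalerA.
Qed.

Lemma inspanD P x y : inspan P x -> inspan P y -> inspan P (x + y).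
Proof. by move=> Px Py; have := inspan_lin 1 Px Py; rewrite scale1r. Qed.

Lemma inspanZ P a x : inspan P x -> inspan P (a *: x).
Proof. by move=> Px; have := inspan_lin a Px (inspan0 P); rewrite addr0. Qed.

Lemma inspanN P x : inspan P x -> inspan P (- x).
Proof. by move=> Px; have := inspanZ (-1) Px; rewrite scaleN1r. Qed.

Lemma inspanB P x y : inspan P x -> inspan P y -> inspan P (x - y).
Proof. by move=> Px Py; apply: inspanD Px (inspanN Py). Qed.

Lemma inspan_sum P (I : Type) (r : seq I) (Pi : pred I) (F : I -> V) :
  (forall i, List.In i r -> Pi i -> inspan P (F i)) ->
  inspan P (\sum_(i <- r | Pi i) F i).
Proof.
elim: r => [|i r IH] PF; first by rewrite big_nil; apply: inspan0.
rewrite big_cons; case: ifP => [Pii|_]; last by apply: IH => j rj; apply: PF; right.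
by apply: inspanD; [apply: PF; [left|] | apply: IH => j rj; apply: PF; right].
Qed.

End Span.

Section LinearMaps.
Variables (K : fieldType) (V W : lmodType K) (f : V -> W).
Hypothesis f_lin : linear f.

Lemma linB : {morph f : x y / x - y}.
Proof. exact: zmod_morphism_linear f_lin. Qed.

Lemma lin0 : f 0 = 0.
Proof. by rewrite -[0 in LHS]subr0 linB subrr. Qed.

Lemma linD : {morph f : x y / x + y}.
Proof. by move=> x y; have := f_lin 1 x y; rewrite !scale1r. Qed.

Lemma linZ : scalable f.
Proof. exact: scalable_linear f_lin. Qed.

Lemma lin_sum (I : Type) (r : seq I) (P : pred I) (F : I -> V) :
  f (\sum_(i <- r | P i) F i) = \sum_(i <- r | P i) f (F i).
Proof. exact: (big_morph f linD lin0). Qed.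

Lemma inspan_image (P : V -> Prop) (Q : W -> Prop) :
  (forall v, P v -> inspan Q (f v)) -> forall x, inspan P x -> inspan Q (f x).
Proof.
move=> PQ _ [s [Ps ->]]; rewrite lin_sum; apply: inspan_sum => p /Ps Pp _.
by rewrite linZ; apply/inspanZ/PQ.
Qed.

End LinearMaps.

Definition bmax (B : nat) (P : nat -> Prop) : nat := \max_(k < B.+1 | `[< P k >]) k.

Lemma bmaxP (B : nat) (P : nat -> Prop) k0 : P k0 -> (forall k, P k -> k <= B)%N ->
  P (bmax B P) /\ (forall k, P k -> k <= bmax B P)%N.
Proof.
move=> Pk0 leB; split.
  have nonempty : (0 < #|[pred k : 'I_B.+1 | `[< P k >]]|)%N.
    apply/card_gt0P; exists (Ordinal (leB k0 Pk0 : k0 < B.+1)%N).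
    by rewrite inE; apply/asboolP.
  rewrite /bmax; have [i Pi ->] := eq_bigmax_cond (fun k : 'I_B.+1 => nat_of_ord k) nonempty.
  exact/asboolP.
move=> k Pk; pose k' := Ordinal (leB k Pk : k < B.+1)%N.
exact: (@leq_bigmax_cond _ _ (fun k : 'I_B.+1 => nat_of_ord k) k' (asboolT Pk)).
Qed.

Lemma bmax_le (B : nat) (P : nat -> Prop) : (bmax B P <= B)%N.
Proof. by apply/bigmax_leqP => i _; rewrite -ltnS. Qed.

Section PredicateDimension.
Variables (K : fieldType) (n : nat).
Implicit Types (P : 'rV[K]_n -> Prop) (A : 'M[K]_n).

Definition rowspace_in P A := forall u : 'rV_n, (u <= A)%MS -> P u.

Definition lin_closed P := forall a u v, P u -> P v -> P (a *: u + v).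

Definition pdim P : nat := bmax n (fun r => exists2 A, \rank A = r & rowspace_in P A).

Lemma pdimP P : P 0 ->
  (exists2 A, \rank A = pdim P & rowspace_in P A) /\
  (forall A, rowspace_in P A -> \rank A <= pdim P)%N.
Proof.
move=> P0; have [||ex max] := bmaxP (k0 := 0%N) (B := n)
  (P := fun r => exists2 A, \rank A = r & rowspace_in P A).
- by exists 0; [rewrite mxrank0 | move=> u; rewrite submx0 => /eqP ->].
- by move=> r [A <- _]; apply: rank_leq_col.
by split=> // A PA; apply: max; exists A.
Qed.

Lemma pdimS P P' : P 0 -> (forall u, P u -> P' u) -> (pdim P <= pdim P')%N.
Proof.
move=> P0 PP'; have [[A <- PA] _] := pdimP P0.
by have [_ ->] := pdimP (PP' 0 P0) => // u /PA /PP'.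
Qed.

Lemma pdim_eq_sub P P' : P 0 -> lin_closed P' -> (forall u, P u -> P' u) ->
  (pdim P' <= pdim P)%N -> forall u, P' u -> P u.
Proof.
move=> P0 linP' PP' le_dim v P'v; have [[A rA PA] _] := pdimP P0.
have P'Av : rowspace_in P' (A + v)%MS.
  move=> u /sub_addsmxP [[u1 u2] /= ->]; rewrite [u2]mx11_scalar mul_scalar_mx addrC.
  by apply: linP' => //; apply/PP'/PA/submxMl.
have [_ rank_le] := pdimP (PP' 0 P0).
have le_rank : (\rank (A + v)%MS <= \rank A)%N.
  by rewrite rA; apply: leq_trans le_dim; apply: rank_le.
have /leqifP := mxrank_leqif_sup (addsmxSl A v); case: ifP => [eqAv _ | _ lt_rank].
  by apply/PA/(submx_trans (addsmxSr A v)).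
by move: (leq_trans lt_rank le_rank); rewrite ltnn.
Qed.

End PredicateDimension.

Lemma leC_refl (C : category) (c : C) : leC c c.
Proof. exact: inhabits (idm c). Qed.

Lemma leC_trans (C : category) (a b c : C) : leC a b -> leC b c -> leC a c.
Proof. by move=> [f] [g]; exact: inhabits (comp g f). Qed.

Lemma monotone_bounded_stable (C : category) (mu : C -> nat) (B : nat) :
  (forall c d : C, leC c d -> mu c <= mu d)%N -> (forall c, mu c <= B)%N ->
  forall c, exists2 d, leC c d & forall e, leC d e -> mu e = mu d.
Proof.
move=> mono bnd c.
have [||[d cd <-] max] := bmaxP (k0 := mu c) (B := B)
  (P := fun m => exists2 d, leC c d & mu d = m).
- by exists c => //; apply: leC_refl.
- by move=> m [d _ <-].
exists d => // e de; apply/eqP; rewrite eqn_leq (mono d e) // andbT.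
by apply: max; exists e => //; apply: leC_trans de.
Qed.

Section Stabilization.
Variables (K : fieldType) (C : category) (Q : C -> lmodType K).
Variables (Rel : forall {c}, Q c -> Prop) (push : forall {c d : C}, Hom c d -> Q c -> Q d).
Variables (I : finType) (src : I -> C) (Y : forall {t d}, Hom (src t) d -> Q d).
Hypothesis push_linear : forall c d (f : Hom c d), linear (push f).
Hypothesis push_rel : forall c d (f : Hom c d) v, Rel v -> inspan (@Rel d) (push f v).
Hypothesis push_aut : forall d (g : Hom d d) v, is_iso g -> inspan (@Rel d) (push g v - v).
Hypothesis Hom_transitive : forall (c d : C) (f1 f2 : Hom c d),
  exists g : Hom d d, is_iso g /\ comp g f1 = f2.
Hypothesis push_Y : forall t c d (f : Hom c d) (h : Hom (src t) c),
  push f (Y h) = Y (comp f h).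
Hypothesis Y_span : forall d w, inspan (fun u => exists t (h : Hom (src t) d), u = Y h) w.

Lemma inspan_push c d (f : Hom c d) v : inspan (@Rel c) v -> inspan (@Rel d) (push f v).
Proof. move=> rel_v; exact (inspan_image (push_linear f) (@push_rel c d f) rel_v). Qed.

Lemma Y_congr t d (h h' : Hom (src t) d) : inspan (@Rel d) (Y h' - Y h).
Proof. by have [g [iso_g <-]] := Hom_transitive h h'; rewrite -push_Y; apply: push_aut. Qed.

Definition avail t d : bool := [pick h : Hom (src t) d].

(* Junk value 0 when [src t] is not below [d], so sums over all [t] are harmless. *)
Definition y t d : Q d := if [pick h : Hom (src t) d] is Some h then Y h else 0.

Lemma availP t d : reflect (leC (src t) d) (avail t d).
Proof.
by rewrite /avail; case: pickP => [h _|none]; constructor; [exists | case=> h; have := none h].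
Qed.

Lemma y_congr t d (h : Hom (src t) d) : inspan (@Rel d) (y t d - Y h).
Proof. by rewrite /y; case: pickP => [h' _|/(_ h) //]; apply: Y_congr. Qed.

Lemma y_push t c d (f : Hom c d) : avail t c -> inspan (@Rel d) (y t d - push f (y t c)).
Proof.
move=> /availP [h].
have -> : y t d - push f (y t c) = (y t d - Y (comp f h)) - push f (y t c - Y h).
  by rewrite (linB (push_linear f)) push_Y opprB addrA subrK.
by apply: inspanB; [apply: y_congr | apply/inspan_push/y_congr].
Qed.

Local Notation N := #|I|.

Definition supported d (a : 'rV[K]_N) := forall t, ~~ avail t d -> a 0 (enum_rank t) = 0.

Definition comb d (a : 'rV[K]_N) : Q d := \sum_t a 0 (enum_rank t) *: y t d.

Definition relvec d a := supported d a /\ inspan (@Rel d) (comb d a).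

Lemma supported_le c d a : leC c d -> supported c a -> supported d a.
Proof.
move=> cd ac t /availP not_d; apply: ac; apply/availP => tc.
exact/not_d/(leC_trans tc).
Qed.

Lemma combD d al a b : comb d (al *: a + b) = al *: comb d a + comb d b.
Proof.
rewrite /comb scaler_sumr -big_split; apply: eq_bigr => t _.
by rewrite !mxE scalerDl scalerA.
Qed.

Lemma comb0 d : comb d 0 = 0.
Proof. by apply: big1 => t _; rewrite mxE scale0r. Qed.

Lemma comb_delta d t : comb d (delta_mx 0 (enum_rank t)) = y t d.
Proof.
rewrite /comb (bigD1 t) //= big1 ?addr0 => [|s /negbTE neq_st].
  by rewrite mxE !eqxx scale1r.
by rewrite mxE (inj_eq enum_rank_inj) neq_st andbF scale0r.
Qed.

Lemma comb_push c d (f : Hom c d) a :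
  supported c a -> inspan (@Rel d) (comb d a - push f (comb c a)).
Proof.
move=> ac; rewrite /comb (lin_sum (push_linear f)) -sumrB; apply: inspan_sum => t _ _.
rewrite (linZ (push_linear f)) -scalerBr; case: (boolP (avail t c)) => [tc | /ac ->].
  exact/inspanZ/y_push.
by rewrite scale0r; apply: inspan0.
Qed.

Lemma relvec_push c d (f : Hom c d) a : relvec c a -> relvec d a.
Proof.
move=> [ac rel_c]; split; first exact: supported_le (inhabits f) ac.
rewrite -(subrK (push f (comb c a)) (comb d a)).
exact: inspanD (comb_push f ac) (inspan_push f rel_c).
Qed.

Lemma relvec0 d : relvec d 0.
Proof. by split=> [t _|]; rewrite ?mxE // comb0; apply: inspan0. Qed.

Lemma relvec_lin_closed d : lin_closed (relvec d).
Proof.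
move=> al a b [ad rel_a] [bd rel_b]; split; last by rewrite combD; apply: inspan_lin.
by move=> t nt; rewrite !mxE ad // bd // mulr0 addr0.
Qed.

Lemma comb_decomp d w : exists2 a, supported d a & inspan (@Rel d) (w - comb d a).
Proof.
have [s [Ys ->]] := Y_span w; elim: s Ys => [|p s IH] Ys.
  exists 0 => [t _|]; first by rewrite mxE.
  by rewrite big_nil comb0 subr0; apply: inspan0.
have [a ad rel_a] := IH (fun q sq => Ys q (or_intror sq)).
have [t [h Yp]] := Ys p (or_introl erefl).
exists (p.1 *: delta_mx 0 (enum_rank t) + a).
  move=> u nu; rewrite !mxE eqxx ad // (inj_eq enum_rank_inj).
  by case: eqP nu => [-> /availP/(_ (inhabits h)) [] | _ _]; rewrite mulr0 addr0.
rewrite big_cons combD comb_delta opprD addrACA -scalerBr Yp.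
by apply: inspanD => //; apply/inspanZ; rewrite -opprB; apply/inspanN/y_congr.
Qed.

Definition sigma d := #|[pred t | avail t d]|.

Definition rho d := pdim (relvec d).

Lemma sigma_le c d : leC c d -> (sigma c <= sigma d)%N.
Proof.
move=> cd; apply/subset_leq_card/subsetP => t; rewrite !inE => /availP tc.
exact/availP/(leC_trans tc).
Qed.

Lemma rho_le c d : leC c d -> (rho c <= rho d)%N.
Proof. by move=> [f]; apply: pdimS (relvec0 c) (relvec_push f). Qed.

Lemma sigma_rho_bound d : (sigma d + rho d <= N + N)%N.
Proof. exact: leq_add (max_card _) (bmax_le _ _). Qed.

Lemma quot_bij_push c d (f : Hom c d) :
  sigma c = sigma d -> rho c = rho d -> quot_bij (@Rel c) (@Rel d) (push f).
Proof.
move=> eq_sigma eq_rho; have cd : leC c d by exists.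
have avail_dc t : avail t d -> avail t c.
  have sub : [pred t | avail t c] \subset [pred t | avail t d].
    by apply/subsetP => s; rewrite !inE => /availP sc; apply/availP/(leC_trans sc).
  have [_] := subset_leqif_card sub; rewrite -/(sigma c) -/(sigma d) eq_sigma eqxx.
  by move=> /esym /subsetP /(_ t); rewrite !inE.
have relvec_dc a : relvec d a -> relvec c a.
  have le_dim : (rho d <= rho c)%N by rewrite eq_rho.
  exact: (pdim_eq_sub (relvec0 c) (@relvec_lin_closed d) (@relvec_push c d f) le_dim).
split=> [v rel_fv | w].
  have [a ac rel_va] := comb_decomp v.
  have [_ rel_ca] : relvec c a.
    apply: relvec_dc; split; first exact: supported_le cd ac.
    rewrite -(subrK (push f (comb c a)) (comb d a)); apply: inspanD; first exact: comb_push.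
    have -> : comb c a = v - (v - comb c a) by rewrite opprB addrC subrK.
    by rewrite (linB (push_linear f)); apply: inspanB rel_fv (inspan_push f rel_va).
  by rewrite -(subrK (comb c a) v); apply: inspanD.
have [a ad rel_wa] := comb_decomp w; exists (comb c a).
rewrite -(subrK (comb d a) w) -addrA; apply: inspanD => //.
by apply: comb_push => t nc; apply: ad; exact: contra (avail_dc t) nc.
Qed.

Theorem stabilizes_of_generators : stabilizes (@Rel) (@push).
Proof.
pose mu c := (sigma c + rho c)%N.
have mu_le c d : leC c d -> (mu c <= mu d)%N.
  by move=> cd; apply: leq_add; [apply: sigma_le | apply: rho_le].
exists (fun c => forall d, leC c d -> mu d = mu c); split; [|split].
- by move=> c d Xc cd e de; rewrite (Xc e (leC_trans cd de)) (Xc d cd).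
- move=> c; have [d cd stable] := monotone_bounded_stable mu_le sigma_rho_bound c.
  by exists d.
move=> c d f Xc; have cd : leC c d by exists.
move: (Xc d cd) (sigma_le cd) (rho_le cd); rewrite /mu => eq_mu le_sigma le_rho.
by apply: quot_bij_push; lia.
Qed.

End Stabilization.

Lemma List_In_nth (T : Type) (x0 x : T) (s : seq T) :
  List.In x s -> exists i : 'I_(size s), nth x0 s i = x.
Proof.
elim: s => [|y s IH] //= [<-|/IH [i <-]]; first by exists ord0.
by exists (lift ord0 i).
Qed.

Lemma is_pullback_iso (C : category) (p p' c1 c2 d : C) (f1 : Hom p c1) (f2 : Hom p c2)
    (g1 : Hom c1 d) (g2 : Hom c2 d) (s : Hom p p') (s' : Hom p' p) :
  comp s' s = idm p -> comp s s' = idm p' ->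
  is_pullback f1 f2 g1 g2 -> is_pullback (comp f1 s') (comp f2 s') g1 g2.
Proof.
move=> s's ss' [commutes univ]; split; first by rewrite !compA commutes.
move=> q u1 u2 /univ [u [[fu1 fu2] u_uniq]]; exists (comp s u); split.
  by rewrite -!compA (compA s' s u) s's comp1m.
move=> u' [fu1' fu2']; have -> : u = comp s' u' by apply: u_uniq; rewrite !compA.
by rewrite compA ss' comp1m.
Qed.

Record cospan (C : category) (c1 c2 : C) := Cospan {
  apex : C; leg1 : Hom c1 apex; leg2 : Hom c2 apex }.

(* The existence half of the universal property of a weak push-out. *)
Definition weakly_initial (C : category) (p c1 c2 : C) (f1 : Hom p c1) (f2 : Hom p c2)
    (w : cospan c1 c2) : Prop :=
  forall z (h1 : Hom c1 z) (h2 : Hom c2 z), is_pullback f1 f2 h1 h2 ->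
    exists h : Hom (apex w) z, comp h (leg1 w) = h1 /\ comp h (leg2 w) = h2.

Section Modules.
Variables (K : fieldType) (C : category) (M : Cmodule K C).
Hypothesis Hom_transitive : forall (c d : C) (f1 f2 : Hom c d),
  exists g : Hom d d, is_iso g /\ comp g f1 = f2.

Lemma act_is_linear (c d : C) (f : Hom c d) : linear (act M f).
Proof. exact: act_linear. Qed.

Variable gens : seq {c : C & Mob M c}.
Hypothesis gens_generate : forall S, is_submodule S ->
  (forall p, List.In p gens -> S (tag p) (tagged p)) -> forall c (x : Mob M c), S c x.

Definition gen_obj (k : 'I_(size gens)) : C := tag (tnth (in_tuple gens) k).
Definition gen_vec (k : 'I_(size gens)) : Mob M (gen_obj k) := tagged (tnth (in_tuple gens) k).

Definition gen_image d (u : Mob M d) : Prop :=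
  exists k (g : Hom (gen_obj k) d), u = act M g (gen_vec k).

Lemma inspan_gen_image d (m : Mob M d) : inspan (@gen_image d) m.
Proof.
apply: (gens_generate (S := fun c => inspan (@gen_image c))); first split.
- by move=> c; apply: inspan0.
- split=> [c a x y|c e f x]; first exact: inspan_lin.
  move=> span_x; apply: (inspan_image (act_is_linear f) _ span_x) => _ [k [g ->]].
  by apply: inspan1; exists k, (comp f g); rewrite act_comp.
move=> p /(List_In_nth p) [k <-]; rewrite -(tnth_nth p (in_tuple gens)).
by apply: inspan1; exists k, (idm _); rewrite act_id.
Qed.

Lemma coinv_rel_act c d (f : Hom c d) v : coinv_rel v -> coinv_rel (act M f v).
Proof.
move=> [g [_ [m ->]]]; have [h [iso_h hf]] := Hom_transitive f (comp f g).
exists h; split=> //; exists (act M f m).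
by rewrite (linB (act_is_linear f)) -act_comp -hf act_comp.
Qed.

Theorem coinvariants_stabilize : stabilizes (@coinv_rel _ C M) (fun c d f => act M f).
Proof.
pose Y k d (h : Hom (gen_obj k) d) := act M h (gen_vec k).
apply: (stabilizes_of_generators (Y := Y)).
- exact: act_is_linear.
- by move=> c d f v /(coinv_rel_act f) /inspan1.
- by move=> d g v iso_g; apply: inspan1; exists g; split=> //; exists v.
- exact: Hom_transitive.
- by move=> t c d f h; rewrite /Y act_comp.
- exact: inspan_gen_image.
Qed.

Section Tensor.
Variable F : freeData K C.

Lemma push_is_linear c d (phi : Hom c d) : linear (@push _ _ F M c d phi).
Proof.
move=> a x y; apply/ffunP => p; rewrite !ffunE scaler_sumr -big_split.
by apply: eq_bigr => q _; rewrite !ffunE act_linear.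
Qed.

Lemma elem_is_linear d (i : 'I_(nF F)) (f : Hom (cs i) d) v : linear (@elem _ _ F M d i f v).
Proof.
move=> a m m'; apply/ffunP => p; rewrite !ffunE scaler_sumr -big_split.
apply: eq_bigr => j _; case: ifP => _ /=; last by rewrite !scaler0 addr0.
by rewrite scalerDr !scalerA mulrC.
Qed.

Lemma push_elem c d (phi : Hom c d) (i : 'I_(nF F)) (f : Hom (cs i) c) v (m : Mob M c) :
  push phi (elem f v m) = elem (comp phi f) v (act M phi m).
Proof.
apply/ffunP => p; rewrite !ffunE.
under eq_bigr => q _ do rewrite ffunE (lin_sum (act_is_linear phi)).
rewrite exchange_big /=; apply: eq_bigr => j _.
under eq_bigr => q _ do rewrite (linZ (act_is_linear phi)).
rewrite -scaler_sumr; congr (_ *: _).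
rewrite big_mkcond (bigD1 (Tagged (fam c) (f, j))) //= big1 ?addr0.
  by rewrite eqxx [p == _]eq_sym; case: ifP => _ //; apply: (lin0 (act_is_linear phi)).
move=> q /negbTE ->; rewrite (lin0 (act_is_linear phi)); by case: ifP.
Qed.

Lemma tens_decomp d (w : Tsp F M d) :
  w = \sum_(p : idx F d) elem (tagged p).1 (delta_mx (tagged p).2 0) (w p).
Proof.
apply/ffunP => q; rewrite sum_ffunE (bigD1 q) //= big1 ?addr0.
  rewrite ffunE (bigD1 (tagged q).2) //= big1 ?addr0.
    by rewrite mxE !eqxx /= scale1r; case: q => i [f j] /=; rewrite eqxx.
  by move=> j /negbTE nj; rewrite mxE nj scale0r.
move=> p neq_pq; rewrite ffunE big1 // => j _; rewrite mxE.
case: eqP => [ej|_]; last by rewrite scale0r.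
rewrite ifF ?scaler0 //; apply/negP => /eqP eq_q; move: neq_pq; rewrite eq_q ej.
by clear eq_q ej j; case: p => i [f j] /=; rewrite eqxx.
Qed.

Lemma tens_rel_aut_elem d (g : Hom d d) (i : 'I_(nF F)) (f : Hom (cs i) d) v (m : Mob M d) :
  is_iso g -> tens_rel (elem (comp g f) v (act M g m) - elem f v m).
Proof. by move=> iso_g; right; exists g, i, f, v, m. Qed.

Lemma tens_rel_push c d (phi : Hom c d) (x : Tsp F M c) : tens_rel x -> tens_rel (push phi x).
Proof.
case=> [[i [f [g [v [m [iso_g ->]]]]]] | [h [i [f [v [m [iso_h ->]]]]]]];
  rewrite (linB (push_is_linear phi)) !push_elem.
  by left; exists i, (comp phi f), g, v, (act M phi m); rewrite compA.
have [s [iso_s sphi]] := Hom_transitive phi (comp phi h).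
by rewrite compA -act_comp -sphi -compA act_comp; apply: tens_rel_aut_elem.
Qed.

Lemma tens_rel_aut d (g : Hom d d) (w : Tsp F M d) :
  is_iso g -> inspan (@tens_rel _ _ F M d) (push g w - w).
Proof.
move=> iso_g; rewrite {2}(tens_decomp w) {1}(tens_decomp w).
rewrite (lin_sum (push_is_linear g)) -sumrB; apply: inspan_sum => p _ _.
by rewrite push_elem; apply/inspan1/tens_rel_aut_elem.
Qed.

Variable reps : forall d : C,
  {s : seq C | forall c, leC c d -> exists c', List.In c' s /\ iso_obj c c'}.
Variable wpo : forall (p c1 c2 : C) (f1 : Hom p c1) (f2 : Hom p c2),
  {w : cospan c1 c2 | weakly_initial f1 f2 w}.
Hypothesis pullbacks : forall (c1 c2 d : C) (g1 : Hom c1 d) (g2 : Hom c2 d),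
  exists (p : C) (f1 : Hom p c1) (f2 : Hom p c2), is_pullback f1 f2 g1 g2.

Definition rep (i : 'I_(nF F)) (r : 'I_(size (sval (reps (cs i))))) : C :=
  nth (cs i) (sval (reps (cs i))) r.

(* (i, j, k) and a span c_i <- p -> c_k whose apex is a chosen representative. *)
Definition tens_index := {i : 'I_(nF F) & {j : 'I_(dims i) & {k : 'I_(size gens) &
  {r : 'I_(size (sval (reps (cs i)))) & (Hom (rep r) (cs i) * Hom (rep r) (gen_obj k))%type}}}}.

Definition tens_src (t : tens_index) : C :=
  let: existT _ (existT _ (existT _ (existT _ (u1, u2)))) := t in apex (sval (wpo u1 u2)).

Definition tens_Y (t : tens_index) d : Hom (tens_src t) d -> Tsp F M d :=
  match t as t return Hom (tens_src t) d -> Tsp F M d with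
  | existT _ (existT j (existT k (existT _ (u1, u2)))) => fun h =>
    elem (comp h (leg1 (sval (wpo u1 u2)))) (delta_mx j 0)
      (act M (comp h (leg2 (sval (wpo u1 u2)))) (gen_vec k))
  end.

Lemma push_tens_Y t c d (phi : Hom c d) (h : Hom (tens_src t) c) :
  push phi (tens_Y h) = tens_Y (comp phi h).
Proof. by case: t h => i [j [k [r [u1 u2]]]] h /=; rewrite push_elem -act_comp !compA. Qed.

Lemma elem_tens_Y d (i : 'I_(nF F)) (j : 'I_(dims i)) k
    (f : Hom (cs i) d) (g : Hom (gen_obj k) d) :
  exists t (h : Hom (tens_src t) d), elem f (delta_mx j 0) (act M g (gen_vec k)) = tens_Y h.
Proof.
have [p [f1 [f2 pb]]] := pullbacks f g.
have [c' [in_c' [s [s' [s's ss']]]]] := svalP (reps (cs i)) p (inhabits f1).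
have [r def_c'] := List_In_nth (cs i) in_c'; subst c'.
have [h [hf hg]] := svalP (wpo (comp f1 s') (comp f2 s')) d f g (is_pullback_iso s's ss' pb).
exists (existT _ i (existT _ j (existT _ k (existT _ r (comp f1 s', comp f2 s'))))), h.
by rewrite /= hf hg.
Qed.

Theorem tensor_coinvariants_stabilize :
  stabilizes (@tens_rel _ _ F M) (fun c d f => @push _ _ F M c d f).
Proof.
apply: (stabilizes_of_generators (Y := tens_Y)).
- exact: push_is_linear.
- by move=> c d f v /(tens_rel_push f) /inspan1.
- exact: tens_rel_aut.
- exact: Hom_transitive.
- exact: push_tens_Y.
move=> d w; rewrite (tens_decomp w); apply: inspan_sum => p _ _.
move: (inspan_gen_image (w p)) => /(inspan_image (elem_is_linear _ _)).
apply=> _ [k [g ->]].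
by have [t [h ->]] := elem_tens_Y (tagged p).2 (tagged p).1 g; apply: inspan1; exists t, h.
Qed.

End Tensor.
End Modules.

Theorem theoremD (R : realType) (C : category) (M : Cmodule (R[i]) C) :
  FI_type C -> fin_gen M ->
  @stabilizes _ C (Mob M) (@coinv_rel _ C M) (fun c d f => act M f) /\
  (forall F : freeData (R[i]) C,
     @stabilizes _ C (Tsp F M) (@tens_rel _ C F M) (fun c d f => @push _ C F M c d f)).
Proof.
move=> [_ [_ [transitive [below [pullbacks pushouts]]]]] [gens generate].
split=> [|F]; first exact (coinvariants_stabilize transitive generate).
have wpo (p c1 c2 : C) (f1 : Hom p c1) (f2 : Hom p c2) :
    exists w : cospan c1 c2, weakly_initial f1 f2 w.
  have [d [g1 [g2 [_ univ]]]] := pushouts p c1 c2 f1 f2.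
  by exists (Cospan g1 g2) => z h1 h2 /univ [h [factors _]]; exists h.
exact: (tensor_coinvariants_stabilize transitive generate F (fun d => cid (below d))
  (fun p c1 c2 f1 f2 => cid (wpo p c1 c2 f1 f2)) pullbacks).
Qed.
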